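(* Let $A$ be a finite set with $|A|=n$ and let $f:A\to A$ be a bijection. Then there exists a binary operation $*$ on $A$ such that $(A,* )$ is a cyclic group and $f$ is an automorphism of $(A,* )$ if and only if either $f$ is the identity map, or there is an index $i$ with $2\le i\le \phi(n)$ such that, writing $\ell_i=\mathrm{ord}_n(k_i)$ and letting $\ell_i>\lambda_1>\cdots>\lambda_t>1$ be the complete list of positive divisors of $\ell_i$ that are greater than $1$, the bijection $f$ has exactly $[U_n:\langle k_i\rangle]+L_{i,\ell_i}$ cycles of length $\ell_i$, exactly $L_{i,\lambda_j}$ cycles of length $\lambda_j$ for each $j=1,\dots,t$, exactly $L_{i,1}+1$ cycles of length $1$ (fixed points), and no other cycles.
   Context: For a bijection $f$ of a finite set, a cycle is a sequence $a_1,\dots,a_m$ of distinct elements with $f(a_j)=a_{j+1}$ for $j<m$ and $f(a_m)=a_1$; its length is $m$; every element lies in exactly one cycle. $\phi$ is Euler's totient function. In the ring $\mathbb{Z}_n=\{0,1,\dots,n-1\}$, let $U_n=\{k\in\mathbb{Z}_n:\gcd(k,n)=1\}$ be the unit group, enumerated as $U_n=\{k_1,k_2,\dots,k_{\phi(n)}\}$ with $k_1=1$. Let $T_n=\mathbb{Z}_n\setminus(U_n\cup\{0\})$, and for $z\in T_n$ put $z'=n/\gcd(z,n)$. For integers $m\ge1$ and $k$ coprime to $m$, $\mathrm{ord}_m(k)$ denotes the least $x\in\mathbb{N}$ with $k^x\equiv1\pmod m$. $\langle k_i\rangle$ is the cyclic subgroup of $U_n$ generated by $k_i$ and $[U_n:\langle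 k_i\rangle]$ its index. For a positive divisor $\lambda$ of $\ell_i$, define $L_{i,\lambda}=\frac{1}{\lambda}\left|\{z\in T_n:\mathrm{ord}_{z'}(k_i)=\lambda\}\right|$. *)

From HB Require Import structures.
From mathcomp Require Import all_boot all_order all_algebra all_fingroup.
Set Implicit Arguments.
Unset Strict Implicit.
Unset Printing Implicit Defensive.
Import GRing.Theory.

Definition gpow (A : Type) (op : A -> A -> A) (e : A) (inv : A -> A)
    (g : A) (z : int) : A :=
  match z with
  | Posz m => iter m (op g) e
  | Negz m => iter m.+1 (op (inv g)) e
  end.

Definition cyclic_group_op (A : Type) (op : A -> A -> A) : Prop :=
  exists (e : A) (inv : A -> A),
    [/\ (forall x y z, op x (op y z) = op (op x y) z),
        (forall x, op e x = x /\ op x e = x),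
        (forall x, op (inv x) x = e /\ op x (inv x) = e) &
        exists g : A, forall x : A, exists z : int, x = gpow op e inv g z].

Definition ncyc (A : finType) (f : {perm A}) (m : nat) : nat :=
  #|[set C in porbits f | #|C| == m]|.

(* ord_m(k): least x >= 1 with k^x = 1 (mod m); (the search range 1..m suffices
   when m >= 1 and k is coprime to m, since ord_m(k) <= phi(m) <= m) *)
Definition ordm (m k : nat) : nat :=
  (find (fun x => k ^ x.+1 == 1 %[mod m]) (iota 0 m)).+1.

Definition Tset (n : nat) : {set 'I_n} :=
  [set z : 'I_n | (val z != 0) && ~~ coprime z n].

Definition Lc (n k lam : nat) : rat :=
  (#|[set z in Tset n | ordm (n %/ gcdn z n) k == lam]|%:R / lam%:R)%R.

(* k as an element of the unit group U_n of Z_n (used for n >= 2, k coprime to n) *)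
Definition kunit (n k : nat) : {unit 'Z_n} := insubd (1%g : {unit 'Z_n}) (k%:R : 'Z_n)%R.

Definition unit_index (n k : nat) : nat :=
  #|[set: {unit 'Z_n}] : <[kunit n k]>|%g.

From mathcomp Require Import all_boot all_order all_algebra all_fingroup all_solvable.
Set Implicit Arguments. Unset Strict Implicit. Unset Printing Implicit Defensive.
Import GRing.Theory Num.Theory.

(* Choosing a generator g identifies a cyclic group of order n with Z_n via
   i |-> g^i; an automorphism f then becomes i |-> k i, where f g = g^k and k is
   a unit, and conversely transporting the additive structure of Z_n along any
   bijection conjugating f to i |-> k i makes f an automorphism.  So f is an
   automorphism of some cyclic group structure iff f is conjugate to x |-> k x
   on Z_n for a unit k.  Two permutations are conjugate iff they have the same
   number of cycles of each length, and the cycle of z under x |-> k x has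
   length ord_{z'}(k), with z' = n / gcd(z, n); counting the points of each
   orbit length among 0, the units and T_n gives the stated cycle numbers,
   which in turn determine all the cycle counts. *)

Definition porbits_of_size (T : finType) (s : {perm T}) m :=
  [set C in porbits s | #|C| == m].

Lemma ncycE (T : finType) (s : {perm T}) m : ncyc s m = #|porbits_of_size s m|.
Proof. by []. Qed.

Lemma dvdn_ext m n : (forall d, (m %| d) = (n %| d)) -> m = n.
Proof. by move=> eq_dvd; apply/eqP; rewrite eqn_dvd eq_dvd dvdnn -eq_dvd dvdnn. Qed.

Section PermOrbits.
Variable T : finType.
Implicit Types (s : {perm T}) (x : T).

Lemma card_porbit_gt0 s x : 0 < #|porbit s x|.
Proof. by rewrite lt0n card_porbit_neq0. Qed.

Lemma iter_porbit_mod s x j : iter j s x = iter (j %% #|porbit s x|) s x.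
Proof.
rewrite {1}(divn_eq j #|porbit s x|) addnC iterD; congr (iter _ _ _).
by elim: (j %/ _) => //= q IHq; rewrite mulSn iterD IHq iter_porbit.
Qed.

Lemma eq_iter_porbit s x i j :
  (iter i s x == iter j s x) = (i == j %[mod #|porbit s x|]).
Proof.
have ltd m := ltn_pmod m (card_porbit_gt0 s x).
rewrite iter_porbit_mod [iter j _ _]iter_porbit_mod.
rewrite -(nth_traject s (ltd i)) -(nth_traject s (ltd j)).
by rewrite nth_uniq ?size_traject ?uniq_traject_porbit.
Qed.

Lemma iter_porbit_id s x j : (iter j s x == x) = (#|porbit s x| %| j).
Proof. by rewrite -[x in _ == x]/(iter 0 s x) eq_iter_porbit mod0n. Qed.

Lemma porbit_eq s x y : x \in porbit s y -> porbit s x = porbit s y.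
Proof. by rewrite -eq_porbit_mem => /eqP. Qed.

Lemma trivIset_porbits s : trivIset (porbits s).
Proof.
apply/trivIsetP => _ _ /imsetP[x _ ->] /imsetP[y _ ->]; apply: contraNT.
rewrite -setI_eq0 => /set0Pn[z /setIP[/porbit_eq <- /porbit_eq <-]].
exact: eqxx.
Qed.

Lemma cover_porbits_of_size s m :
  cover (porbits_of_size s m) = [set x | #|porbit s x| == m].
Proof.
apply/setP => x; rewrite inE; apply/bigcupP/idP.
  by case=> _ /setIdP[/imsetP[y _ ->] size_m] /porbit_eq ->.
by move=> size_m; exists (porbit s x); rewrite ?inE ?imset_f ?porbit_id.
Qed.

Lemma ncyc_mul s m : ncyc s m * m = #|[set x | #|porbit s x| == m]|.
Proof.
rewrite -cover_porbits_of_size.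
have sub_porbits : porbits_of_size s m \subset porbits s.
  by apply/subsetP => C /setIdP[].
have /leqifP := leq_card_cover (porbits_of_size s m).
rewrite (trivIsetS sub_porbits (trivIset_porbits s)) => /eqP ->.
rewrite ncycE -sum_nat_const; apply: eq_bigr => C.
by rewrite inE => /andP[_ /eqP].
Qed.

End PermOrbits.

Section Conjugation.
Variables (A B : finType) (f : {perm A}) (g : {perm B}) (h : B -> A).
Hypothesis fh : forall y, f (h y) = h (g y).

Lemma iter_conj j y : iter j f (h y) = h (iter j g y).
Proof. by elim: j => //= j ->; rewrite fh. Qed.

Lemma porbit_conj y : porbit f (h y) = h @: porbit g y.
Proof.
apply/setP => x; apply/porbitP/imsetP => [[i ->] | [_ /porbitP[i ->] ->]].
  by exists ((g ^+ i)%g y); rewrite ?mem_porbit // !permX iter_conj.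
by exists i; rewrite !permX iter_conj.
Qed.

Lemma ncyc_conj : bijective h -> ncyc f =1 ncyc g.
Proof.
case=> h' hK h'K m; have h_inj := can_inj hK; rewrite !ncycE.
have -> : porbits_of_size f m = [set h @: C | C : {set B} in porbits_of_size g m].
  apply/setP => D; rewrite inE; apply/andP/imsetP => [[/imsetP[x _ ->]] | [C]].
    rewrite -[x]h'K porbit_conj card_imset // => size_m.
    by exists (porbit g (h' x)); rewrite // inE imset_f ?size_m.
  case/setIdP => /imsetP[y _ ->] size_m ->.
  by split; [rewrite -porbit_conj imset_f | rewrite card_imset].
by rewrite card_imset //; apply: imset_inj.
Qed.

End Conjugation.

Section ConjugacyFromCycleType.
Variables (A B : finType) (f : {perm A}) (g : {perm B}) (a0 : A).
Hypotheses (eq_ncyc : ncyc f =1 ncyc g) (eq_card : #|A| = #|B|).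

Definition match_cycle (C : {set B}) : {set A} :=
  nth set0 (enum (porbits_of_size f #|C|)) (index C (enum (porbits_of_size g #|C|))).

Lemma size_enum_porbits_of_size m :
  size (enum (porbits_of_size f m)) = size (enum (porbits_of_size g m)).
Proof. by rewrite -!cardE; exact: eq_ncyc. Qed.

Lemma index_porbits_of_size C : C \in porbits g ->
  index C (enum (porbits_of_size g #|C|)) < size (enum (porbits_of_size f #|C|)).
Proof.
by move=> gC; rewrite size_enum_porbits_of_size index_mem mem_enum inE gC /=.
Qed.

Lemma match_cycle_of_size C :
  C \in porbits g -> match_cycle C \in porbits_of_size f #|C|.
Proof. by move=> gC; rewrite -mem_enum mem_nth ?index_porbits_of_size. Qed.

Lemma card_match_cycle C : C \in porbits g -> #|match_cycle C| = #|C|.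
Proof. by move/match_cycle_of_size => /setIdP[_ /eqP]. Qed.

Lemma match_cycle_inj : {in porbits g &, injective match_cycle}.
Proof.
move=> C C' gC gC' eq_match; have size_eq : #|C'| = #|C|.
  by rewrite -card_match_cycle // -eq_match card_match_cycle.
have gC'm : C' \in enum (porbits_of_size g #|C|) by rewrite mem_enum inE gC' size_eq eqxx.
move/eqP: eq_match; rewrite /match_cycle size_eq nth_uniq ?enum_uniq //.
- by move/eqP/(index_inj set0); apply; rewrite // mem_enum inE gC /=.
- exact: index_porbits_of_size.
- by move: (index_porbits_of_size gC'); rewrite size_eq.
Qed.

Let start y := odflt y [pick z in porbit g y].

Lemma start_porbit y : start y \in porbit g y.
Proof. by rewrite /start; case: pickP => [//|/(_ y)]; rewrite porbit_id. Qed.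

Lemma start_eq y y' : porbit g y = porbit g y' -> start y = start y'.
Proof. by rewrite /start => ->; case: pickP => [//|/(_ y')]; rewrite porbit_id. Qed.

Let target y := odflt a0 [pick x in match_cycle (porbit g y)].

Lemma porbit_target y : porbit f (target y) = match_cycle (porbit g y).
Proof.
rewrite /target.
have /match_cycle_of_size/setIdP[/imsetP[x _ ->] _] : porbit g y \in porbits g.
  exact: imset_f.
by case: pickP => [x' /porbit_eq // | /(_ x)]; rewrite porbit_id.
Qed.

Lemma card_porbit_target y : #|porbit f (target y)| = #|porbit g (start y)|.
Proof.
by rewrite porbit_target card_match_cycle ?imset_f // (porbit_eq (start_porbit y)).
Qed.

(* The j-th iterate of the start of a g-cycle C goes to the j-th iterate of a
   chosen point of the matching f-cycle, which has the same length as C. *)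
Definition conj_map y : A :=
  iter (index y (traject g (start y) #|porbit g y|)) f (target y).

Lemma conj_mapE y j : iter j g (start y) = y -> conj_map y = iter j f (target y).
Proof.
move=> yE; have porbit_y : y \in traject g (start y) #|porbit g y|.
  rewrite -(porbit_eq (start_porbit y)) -porbit_traject.
  by rewrite (porbit_eq (start_porbit y)) porbit_id.
apply/eqP; rewrite eq_iter_porbit card_porbit_target -eq_iter_porbit yE.
have := nth_index (start y) porbit_y; rewrite nth_traject => [-> //|].
by move: porbit_y; rewrite -index_mem size_traject.
Qed.

Lemma exists_iter_start y : exists j, iter j g (start y) = y.
Proof.
have /porbitP[j yE] : y \in porbit g (start y).
  by rewrite (porbit_eq (start_porbit y)) porbit_id.
by exists j; rewrite -permX -yE.
Qed.

Lemma conj_map_comm y : f (conj_map y) = conj_map (g y).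
Proof.
have [j yE] := exists_iter_start y.
have porbit_gy : porbit g (g y) = porbit g y.
  by rewrite -[g y]/(iter 1 g y) -permX porbit_perm.
have start_gy : start (g y) = start y by apply: start_eq.
rewrite (conj_mapE yE) (@conj_mapE _ j.+1) /= ?start_gy ?yE //.
by rewrite /target porbit_gy.
Qed.

Lemma conj_map_inj : injective conj_map.
Proof.
move=> y y' eq_map.
have [[j yE] [j' y'E]] := (exists_iter_start y, exists_iter_start y').
have eq_porbit : porbit g y = porbit g y'.
  apply: match_cycle_inj; rewrite ?imset_f // -!porbit_target.
  rewrite -(porbit_perm f j (target y)) -(porbit_perm f j' (target y')) !permX.
  by rewrite -(conj_mapE yE) -(conj_mapE y'E) eq_map.
have eq_target : target y' = target y by rewrite /target eq_porbit.
move/eqP: eq_map; rewrite (conj_mapE yE) (conj_mapE y'E) eq_target.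
rewrite eq_iter_porbit card_porbit_target -eq_iter_porbit yE.
by rewrite (start_eq eq_porbit) y'E => /eqP.
Qed.

Lemma conj_of_eq_ncyc :
  exists2 h : B -> A, bijective h & forall y, f (h y) = h (g y).
Proof.
exists conj_map; last exact: conj_map_comm.
by apply: inj_card_bij; rewrite ?eq_card //; exact: conj_map_inj.
Qed.

End ConjugacyFromCycleType.

Lemma totient_leq n : totient n <= n.
Proof.
rewrite totient_count_coprime.
apply: (@leq_trans (\sum_(0 <= i < n) 1)).
  by apply: leq_sum => i _; exact: leq_b1.
by rewrite sum_nat_const_nat subn0 muln1.
Qed.

Section MultiplicativeOrder.
Variables (d k : nat).
Hypotheses (d_gt0 : 0 < d) (cop : coprime k d).

Lemma has_ordm : has (fun x => k ^ x.+1 == 1 %[mod d]) (iota 0 d).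
Proof.
apply/hasP; exists (totient d).-1; last by rewrite prednK ?totient_gt0 ?Euler_exp_totient.
by rewrite mem_iota (leq_trans _ (totient_leq d)) // prednK ?totient_gt0.
Qed.

Lemma find_ordm_lt : find (fun x => k ^ x.+1 == 1 %[mod d]) (iota 0 d) < d.
Proof. by rewrite -[d in _ < d](size_iota 0) -has_find has_ordm. Qed.

Lemma expn_ordm : k ^ ordm d k = 1 %[mod d].
Proof. by have /eqP := nth_find 0 has_ordm; rewrite nth_iota ?find_ordm_lt. Qed.

Lemma ordm_min j : 0 < j < ordm d k -> (k ^ j == 1 %[mod d]) = false.
Proof.
case: j => [//|j] /=; rewrite /ordm ltnS => lt_j.
by have := before_find 0 lt_j; rewrite nth_iota // (ltn_trans lt_j find_ordm_lt).
Qed.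

Lemma expn_mod_ordm i : k ^ i = k ^ (i %% ordm d k) %[mod d].
Proof.
have -> : k ^ i = (k ^ ordm d k) ^ (i %/ ordm d k) * k ^ (i %% ordm d k).
  by rewrite -expnM -expnD mulnC -divn_eq.
by rewrite -modnMml -modnXm expn_ordm modnXm exp1n modnMml mul1n.
Qed.

Lemma ordm_dvdn i : (k ^ i == 1 %[mod d]) = (ordm d k %| i).
Proof.
rewrite /= expn_mod_ordm /dvdn; have [-> | r_gt0] := posnP (i %% ordm d k).
  by rewrite expn0 eqxx.
by rewrite ordm_min ?r_gt0 ?ltn_pmod.
Qed.

End MultiplicativeOrder.

Lemma ordm1 k : ordm 1 k = 1.
Proof. by rewrite /ordm /= !modn1. Qed.

Lemma eqn_mod_mul_gcd n i a b : 0 < n ->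
  (a * i == b * i %[mod n]) = (a == b %[mod n %/ gcdn i n]).
Proof.
move=> n_gt0; wlog le_ba : a b / b <= a.
  move=> le_wlog; case: (leqP b a) => [/le_wlog // | /ltnW/le_wlog].
  by rewrite eq_sym => ->.
set g := gcdn i n; have g_gt0 : 0 < g by rewrite gcdn_gt0 n_gt0 orbT.
have [nE iE] : n = n %/ g * g /\ i = i %/ g * g by rewrite !divnK ?dvdn_gcdl ?dvdn_gcdr.
have cop : coprime (n %/ g) (i %/ g).
  by rewrite /coprime -(eqn_pmul2r g_gt0) mul1n muln_gcdl -nE -iE gcdnC.
rewrite eqn_mod_dvd ?leq_mul2r ?le_ba ?orbT // eqn_mod_dvd // -mulnBl.
by rewrite {1}nE {1}iE mulnA dvdn_pmul2r // Gauss_dvdl.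
Qed.

Section MulrnZp.
Variables (n k : nat).

Lemma val_mulrn_Zp (i : 'I_n.+1) : val (i *+ k)%R = (k * i) %% n.+1.
Proof. by rewrite Zp_mulrn /= mulnC. Qed.

Lemma mulrn_Zp_id (i : 'I_n.+1) : k = 1 %[mod n.+1] -> (i *+ k)%R = i.
Proof.
move=> k1; apply: val_inj.
by rewrite val_mulrn_Zp -modnMml k1 modnMml mul1n modn_small.
Qed.

Lemma mulrn_Zp_inj : coprime k n.+1 -> injective (fun i : 'I_n.+1 => (i *+ k)%R).
Proof.
move=> cop i j /(congr1 val)/eqP; rewrite !val_mulrn_Zp ![k * _]mulnC.
rewrite -/(_ == _ %[mod n.+1]) eqn_mod_mul_gcd // (eqP cop) divn1.
by rewrite !modn_small // => /eqP/val_inj.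
Qed.

Lemma coprime_of_mulrn_Zp_inj :
  injective (fun i : 'I_n.+1 => (i *+ k)%R) -> coprime k n.+1.
Proof.
case: (posnP n) => [-> _ | n_gt0 /injF_bij[mulk' mulkK mulkK']]; first exact: coprimen1.
have one_lt : 1 < n.+1 by rewrite ltnS.
have /(congr1 val) := mulkK' (inZp 1); rewrite val_mulrn_Zp /= (modn_small one_lt).
case: (posnP k) => [-> | k_gt0 kE]; first by rewrite mul0n mod0n.
by apply: modn_coprime k_gt0 _; exists (mulk' (inZp 1)).
Qed.

End MulrnZp.

Lemma order_kunit n k : 1 < n -> coprime k n -> #[kunit n k]%g = ordm n k.
Proof.
move=> n_gt1 cop; have n_gt0 := ltnW n_gt1.
have kE : val (kunit n k) = (k%:R : 'Z_n)%R.
  by rewrite /kunit insubdK // unitZpE // coprime_sym.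
apply: dvdn_ext => j; rewrite order_dvdn -ordm_dvdn // -val_eqE /=.
by rewrite FinRing.val_unitX kE -natrX -val_eqE /= val_Zp_nat // Zp_cast.
Qed.

Lemma unit_index_mul_ordm n k :
  1 < n -> coprime k n -> unit_index n k * ordm n k = totient n.
Proof.
move=> n_gt1 cop; rewrite /unit_index -order_kunit // mulnC.
rewrite -[#[_]%g]/(#|<[kunit n k]>%g|) Lagrange ?subsetT //.
by rewrite -(card_units_Zp (ltnW n_gt1)).
Qed.

Definition cycle_type_formula (n k : nat) (c : nat -> nat) : Prop :=
  let l := ordm n k in
  [/\ ((c l)%:R = (unit_index n k)%:R + Lc n k l :> rat)%R,
      (forall lam, 1 < lam < l -> lam %| l -> ((c lam)%:R = Lc n k lam :> rat)%R),
      ((c 1)%:R = Lc n k 1 + 1 :> rat)%R &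
      (forall m, ~~ (m %| l) -> c m = 0)].

Lemma cycle_type_formula_unique n k c c' :
  cycle_type_formula n k c -> cycle_type_formula n k c' -> c =1 c'.
Proof.
move=> [c_l c_mid c_1 c_ndvd] [c'_l c'_mid c'_1 c'_ndvd] m.
have natr_inj a b : (a%:R = b%:R :> rat)%R -> a = b by move/eqP; rewrite eqr_nat => /eqP.
have [m_dvd | m_ndvd] := boolP (m %| ordm n k); last by rewrite c_ndvd ?c'_ndvd.
have [-> | m_ne_l] := eqVneq m (ordm n k); first by apply: natr_inj; rewrite c_l c'_l.
have [-> | m_ne1] := eqVneq m 1; first by apply: natr_inj; rewrite c_1 c'_1.
have m_gt0 : 0 < m by case: m m_dvd {m_ne_l m_ne1}; rewrite ?dvd0n.
have m_mid : 1 < m < ordm n k.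
  by rewrite ltn_neqAle eq_sym m_ne1 m_gt0 ltn_neqAle m_ne_l dvdn_leq.
by apply: natr_inj; rewrite c_mid ?c'_mid.
Qed.

Lemma card_set_sum (T : finType) (P : pred T) : #|[set x | P x]| = \sum_x P x.
Proof. by rewrite -sum1dep_card big_mkcond; apply: eq_bigr => x _; case: (P x). Qed.

Lemma natr_div_eq (a b c : nat) : 0 < c -> a * c = b -> (a%:R = b%:R / c%:R :> rat)%R.
Proof. by move=> c_gt0 <-; rewrite natrM mulfK // pnatr_eq0 -lt0n. Qed.

Section MulrnZpCycles.
Variables (n k : nat) (g : {perm 'I_n.+1}).
Hypotheses (k_bounds : 1 < k < n.+1) (cop : coprime k n.+1)
  (gE : forall i, g i = (i *+ k)%R).
Local Notation N := n.+1.

Lemma val_iter_mulrn j i : val (iter j g i) = (k ^ j * i) %% N.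
Proof.
elim: j => [|j IHj]; first by rewrite mul1n modn_small.
by rewrite iterS gE val_mulrn_Zp IHj modnMmr mulnA -expnS.
Qed.

Lemma card_porbit_mulrn i : #|porbit g i| = ordm (N %/ gcdn i N) k.
Proof.
have gcd_gt0 : 0 < gcdn i N by rewrite gcdn_gt0 orbT.
have d_gt0 : 0 < N %/ gcdn i N by rewrite divn_gt0 // dvdn_leq ?dvdn_gcdr.
have cop_d : coprime k (N %/ gcdn i N).
  by apply: coprime_dvdr cop; rewrite dvdn_divLR ?dvdn_gcdr // dvdn_mulr.
apply: dvdn_ext => j; rewrite -iter_porbit_id -ordm_dvdn // -eqn_mod_mul_gcd //.
by rewrite -val_eqE val_iter_mulrn mul1n (modn_small (ltn_ord i)).
Qed.

Lemma card_porbit_mulrn_dvdn i : #|porbit g i| %| ordm N k.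
Proof.
rewrite -iter_porbit_id -val_eqE val_iter_mulrn -modnMml expn_ordm //.
by rewrite modnMml mul1n modn_small.
Qed.

Lemma ordm_mulrn_gt1 : 1 < ordm N k.
Proof.
case/andP: k_bounds => k_gt1 k_lt.
have : ~~ (ordm N k %| 1).
  by rewrite -ordm_dvdn // expn1 !modn_small ?gtn_eqF // (ltn_trans k_gt1).
by rewrite dvdn1 ltn_neqAle eq_sym => ->.
Qed.

Lemma card_porbit_mulrn_eq lam : #|[set i | #|porbit g i| == lam]| =
  (lam == 1) + (ordm N k == lam) * totient N
  + #|[set z in Tset N | ordm (N %/ gcdn z N) k == lam]|.
Proof.
pose P (z : 'I_N) := ordm (N %/ gcdn z N) k == lam.
have -> : [set i | #|porbit g i| == lam] = [set i | P i].
  by apply/setP => i; rewrite !inE card_porbit_mulrn.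
have N_ne1 : N != 1.
  by case/andP: k_bounds => k_gt1 k_lt; rewrite gtn_eqF ?(ltn_trans k_gt1).
have split_P i : (P i : nat) =
    ((val i == 0) && P i) + (coprime i N && P i) + ((i \in Tset N) && P i).
  rewrite inE; have [i0 | i_ne0] := eqVneq (val i) 0.
    by rewrite i0 /coprime gcd0n (negbTE N_ne1) /= !addn0.
  by case: (coprime i N); case: (P i).
rewrite !card_set_sum (eq_bigr _ (fun i _ => split_P i)) !big_split /=.
congr (_ + _ + _).
- rewrite (bigD1 ord0) //= big1 ?addn0 => [|i]; last by rewrite -val_eqE => /negbTE ->.
  by rewrite /P gcd0n divnn ordm1 eq_sym.
- transitivity (\sum_(i : 'I_N) (coprime i N && (ordm N k == lam))).
    by apply: eq_bigr => i _; case cop_i: (coprime i N); rewrite //= /P (eqP cop_i) divn1.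
  case: (ordm N k == lam); last by rewrite big1 // => i _; rewrite andbF.
  rewrite mul1n totient_count_coprime big_mkord.
  by apply: eq_bigr => i _; rewrite andbT coprime_sym.
Qed.

Lemma cycle_type_formula_mulrn : cycle_type_formula N k (ncyc g).
Proof.
have N_gt1 : 1 < N by case/andP: k_bounds; exact: ltn_trans.
set l := ordm N k; have l_gt1 : 1 < l := ordm_mulrn_gt1.
have l_ne1 : (l == 1) = false by rewrite gtn_eqF.
have count_lam lam : ncyc g lam * lam = (lam == 1) + (l == lam) * totient N
    + #|[set z in Tset N | ordm (N %/ gcdn z N) k == lam]|.
  by rewrite ncyc_mul card_porbit_mulrn_eq.
split.
- rewrite (natr_div_eq _ (count_lam l)) ?(ltnW l_gt1) // l_ne1 eqxx mul1n.
  rewrite -(unit_index_mul_ordm N_gt1 cop) natrD natrM mulrDl mulfK //.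
  by rewrite pnatr_eq0 -lt0n ltnW.
- move=> lam /andP[lam_gt1 lam_lt] _.
  rewrite (natr_div_eq _ (count_lam lam)) ?(ltnW lam_gt1) // gtn_eqF //.
  by rewrite eq_sym ltn_eqF.
- by rewrite (natr_div_eq _ (count_lam 1)) // l_ne1 eqxx natrD addrC /Lc !divr1.
- move=> m m_ndvd; apply/eqP; rewrite ncycE cards_eq0; apply/eqP/setP => C.
  rewrite !inE; apply/negbTE; apply: contra m_ndvd => /andP[/imsetP[i _ ->] /eqP <-].
  exact: card_porbit_mulrn_dvdn.
Qed.

Lemma cycle_type_formula_mulrnP c : cycle_type_formula N k c <-> c =1 ncyc g.
Proof.
split=> [c_formula | eq_c]; first exact: cycle_type_formula_unique cycle_type_formula_mulrn.
have [g_l g_mid g_1 g_ndvd] := cycle_type_formula_mulrn.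
split; rewrite ?eq_c //.
- by move=> lam lam_mid lam_dvd; rewrite eq_c g_mid.
- by move=> m m_ndvd; rewrite eq_c g_ndvd.
Qed.

End MulrnZpCycles.

Section CyclicGroupOp.
Variables (A : finType) (op : A -> A -> A) (e : A) (inv : A -> A) (g : A).
Hypotheses (opA : associative op) (op_id : forall x, op e x = x /\ op x e = x)
  (op_inv : forall x, op (inv x) x = e /\ op x (inv x) = e)
  (op_gen : forall x, exists z : int, x = gpow op e inv g z).
Local Notation pow m := (gpow op e inv g (Posz m)).

Lemma op_inj x : injective (op x).
Proof.
move=> y z eq_op.
by rewrite -[y](op_id y).1 -(op_inv x).1 -opA eq_op opA (op_inv x).1 (op_id z).1.
Qed.

(* Left translation by g: its orbit through e is the set of powers of g. *)
Let shift := perm (@op_inj g).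

Lemma iter_shift m : iter m shift e = pow m.
Proof. exact: eq_iter (permE _) m e. Qed.

Lemma gpowD a b : pow (a + b) = op (pow a) (pow b).
Proof.
elim: a => [|a IHa]; first by rewrite /= (op_id _).1.
by rewrite addSn -[LHS]/(op g (pow (a + b))) IHa opA.
Qed.

Lemma iter_op_gpow c m : iter m (op (pow c)) e = pow (c * m).
Proof. by elim: m => [|m IHm]; rewrite ?muln0 // mulnS gpowD -IHm. Qed.

Lemma gpow_card_porbit : pow #|porbit shift e| = e.
Proof. by rewrite -iter_shift iter_porbit. Qed.

Lemma inv_gen : inv g = pow #|porbit shift e|.-1.
Proof.
have gK : op g (pow #|porbit shift e|.-1) = e.
  rewrite -[op g _]/(pow #|porbit shift e|.-1.+1).
  by rewrite prednK ?card_porbit_gt0 ?gpow_card_porbit.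
by rewrite -[inv g](op_id _).2 -{1}gK opA (op_inv g).1 (op_id _).1.
Qed.

Lemma gpow_surj x : exists m, x = pow m.
Proof.
have [[m|m] ->] := op_gen x; first by exists m.
by exists (#|porbit shift e|.-1 * m.+1); rewrite -iter_op_gpow -inv_gen.
Qed.

Lemma card_porbit_shift : #|porbit shift e| = #|A|.
Proof.
apply: eq_card => x; have [m ->] := gpow_surj x.
by rewrite -iter_shift -permX mem_porbit.
Qed.

Lemma eq_gpow i j : (pow i == pow j) = (i == j %[mod #|A|]).
Proof. by rewrite -!iter_shift eq_iter_porbit card_porbit_shift. Qed.

End CyclicGroupOp.

Definition conj_mulrn (A : finType) n (f : {perm A}) (k : nat) :=
  exists2 h : 'I_n.+1 -> A, bijective h & forall i, f (h i) = h (i *+ k)%R.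

Lemma aut_cyclic_group_conj (A : finType) n (f : {perm A}) (op : A -> A -> A) :
  #|A| = n.+1 -> cyclic_group_op op -> {morph f : x y / op x y} ->
  exists k : 'I_n.+1, conj_mulrn n f k.
Proof.
move=> cardA [e [inv [opA op_id op_inv [g op_gen]]]] fM.
pose pow m := gpow op e inv g (Posz m).
have eq_pow i j : (pow i == pow j) = (i == j %[mod n.+1]) by rewrite -cardA eq_gpow.
have fe : f e = e.
  by apply: (op_inj opA op_id op_inv (x := f e)); rewrite -fM (op_id e).1 (op_id _).2.
have f_pow m : f (pow m) = iter m (op (f g)) e.
  by elim: m => [|m IHm]; rewrite ?fe //= -IHm -fM.
have [c gE] := gpow_surj opA op_id op_inv op_gen (f g).
exists (inZp c); exists (fun i : 'I_n.+1 => pow i) => [|i].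
  apply: inj_card_bij; last by rewrite card_ord cardA.
  by move=> i j /eqP; rewrite eq_pow !modn_small // => /eqP/val_inj.
apply/eqP; rewrite f_pow gE iter_op_gpow // eq_pow val_mulrn_Zp /=.
by rewrite modn_mod modnMml.
Qed.

Lemma cyclic_group_op_of_conj_mulrn (A : finType) n (f : {perm A}) k :
  conj_mulrn n f k -> exists op, cyclic_group_op op /\ {morph f : x y / op x y}.
Proof.
case=> h [h' hK h'K] fh; pose op x y := h (h' x + h' y)%R.
have h'f x : h' (f x) = (h' x *+ k)%R by rewrite -{1}(h'K x) fh hK.
exists op; split => [|x y]; last by rewrite /op fh !h'f mulrnDl.
pose e := h 0%R; pose inv x := h (- h' x)%R; pose g := h (inZp 1).
exists e, inv; split.
- by move=> x y z; rewrite /op !hK addrA.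
- by move=> x; rewrite /op hK add0r addr0 h'K.
- by move=> x; rewrite /op hK addNr subrr.
exists g => x; exists (Posz (h' x)).
have gpow_g m : gpow op e inv g (Posz m) = h (inZp m).
  elim: m => [|m IHm]; first by congr h; apply: val_inj; rewrite /= mod0n.
  rewrite -[LHS]/(op g (gpow op e inv g (Posz m))) IHm /op !hK.
  by congr h; apply: val_inj; rewrite /= modnDm add1n.
by rewrite gpow_g valZpK h'K.
Qed.

Lemma conj_mulrn1 (A : finType) n : #|A| = n.+1 -> conj_mulrn n (1%g : {perm A}) 1.
Proof.
move=> cardA; exists (fun i => enum_val (cast_ord (esym cardA) i)) => [|i].
  apply: inj_card_bij; last by rewrite card_ord cardA.
  by move=> i j /enum_val_inj/cast_ord_inj.
by rewrite perm1 mulr1n.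
Qed.

Lemma coprime_of_conj_mulrn (A : finType) n (f : {perm A}) k :
  conj_mulrn n f k -> coprime k n.+1.
Proof.
case=> h h_bij fh; apply: coprime_of_mulrn_Zp_inj => i j eq_ij.
by apply: (bij_inj h_bij); apply: (@perm_inj _ f); rewrite !fh eq_ij.
Qed.

Lemma conj_mulrn_id (A : finType) n (f : {perm A}) k :
  k = 1 %[mod n.+1] -> conj_mulrn n f k -> f = 1%g.
Proof.
move=> k1 [h [h' hK h'K] fh]; apply/permP => x.
by rewrite perm1 -(h'K x) fh mulrn_Zp_id.
Qed.

Section ConjMulrnCycleType.
Variables (A : finType) (n k : nat) (f : {perm A}).
Hypotheses (k_bounds : 1 < k < n.+1) (cop : coprime k n.+1).
Let g := perm (mulrn_Zp_inj cop).
Let gE : forall i, g i = (i *+ k)%R := permE (mulrn_Zp_inj cop).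

Lemma cycle_type_formula_of_conj_mulrn :
  conj_mulrn n f k -> cycle_type_formula n.+1 k (ncyc f).
Proof.
case=> h h_bij fh; apply/(cycle_type_formula_mulrnP k_bounds cop gE).
have fhg i : f (h i) = h (g i) by rewrite fh gE.
exact: ncyc_conj fhg h_bij.
Qed.

Lemma conj_mulrn_of_cycle_type_formula :
  #|A| = n.+1 -> cycle_type_formula n.+1 k (ncyc f) -> conj_mulrn n f k.
Proof.
move=> cardA /(cycle_type_formula_mulrnP k_bounds cop gE) eq_ncyc.
have /card_gt0P[a0 _] : 0 < #|A| by rewrite cardA.
have [h h_bij fh] := conj_of_eq_ncyc a0 eq_ncyc (etrans cardA (esym (card_ord _))).
by exists h => // i; rewrite fh gE.
Qed.

End ConjMulrnCycleType.

Theorem theorem2p1 (A : finType) (n : nat) (hA : #|A| = n) (hn : 0 < n)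
    (f : {perm A}) :
  (exists op : A -> A -> A,
      cyclic_group_op op /\ (forall x y, f (op x y) = op (f x) (f y)))
  <->
  (f = 1%g \/
   exists k : nat,
     [/\ 1 < k < n, coprime k n &
       let l := ordm n k in
       [/\ ((ncyc f l)%:R = (unit_index n k)%:R + Lc n k l :> rat)%R,
           (forall lam, 1 < lam < l -> lam %| l ->
              ((ncyc f lam)%:R = Lc n k lam :> rat)%R),
           ((ncyc f 1)%:R = Lc n k 1 + 1 :> rat)%R &
           (forall m, ~~ (m %| l) -> ncyc f m = 0)]]).
Proof.
case: n hA hn => // n cardA _; split.
- case=> op [op_cyc fM]; have [k fk] := aut_cyclic_group_conj cardA op_cyc fM.
  have cop := coprime_of_conj_mulrn fk.
  have [k_le1 | k_gt1] := leqP k 1.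
    left; apply: conj_mulrn_id fk.
    (* k = 0 is coprime to n.+1 only when n = 0 *)
    by case: (val k) k_le1 cop => [|[|]] //; rewrite /coprime gcd0n => _ /eqP[->].
  have k_bounds : 1 < k < n.+1 by rewrite k_gt1 ltn_ord.
  right; exists k; split => //; exact: cycle_type_formula_of_conj_mulrn fk.
case=> [-> | [k [k_bounds cop f_formula]]].
  exact: cyclic_group_op_of_conj_mulrn (conj_mulrn1 cardA).
apply: cyclic_group_op_of_conj_mulrn.
exact: conj_mulrn_of_cycle_type_formula k_bounds cop cardA f_formula.
Qed.
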